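(* Let $(X,T)$ be a topological dynamical system. Then $\operatorname{supp}(X,T)$ is the smallest closed subset $K$ of $X$ with the following property: for every $x\in X$ and every open set $U\supseteq K$, the set $N(x,U)=\{n\in\mathbb{Z}_+:T^nx\in U\}$ has Banach density one. That is, $\operatorname{supp}(X,T)$ has this property, and every closed set $K\subset X$ with this property contains $\operatorname{supp}(X,T)$.
   Context: A topological dynamical system $(X,T)$ consists of a non-empty compact metric space $(X,d)$ and a continuous map $T:X\to X$. $\operatorname{supp}(X,T)$ is the smallest closed set $C\subset X$ with $\mu(C)=1$ for all $T$-invariant Borel probability measures $\mu$. A set $F\subset\mathbb{Z}_+$ has Banach density one if for every $\lambda<1$ there is $N\ge1$ with $\#(F\cap I)\ge\lambda\,\#(I)$ for every interval of integers $I\subset\mathbb{Z}_+$ with $\#(I)\ge N$. *)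

From Stdlib Require Import Reals List.
Import ListNotations.
Open Scope R_scope.

Section TDS.
Variable X : Type.
Variable d : X -> X -> R.

Definition is_metric : Prop :=
  (forall x y, 0 <= d x y) /\
  (forall x y, d x y = 0 <-> x = y) /\
  (forall x y, d x y = d y x) /\
  (forall x y z, d x z <= d x y + d y z).

Definition is_open (U : X -> Prop) : Prop :=
  forall x, U x -> exists eps, 0 < eps /\ forall y, d x y < eps -> U y.

Definition is_closed (C : X -> Prop) : Prop := is_open (fun x => ~ C x).

Definition is_compact : Prop :=
  forall (I : Type) (U : I -> X -> Prop),
    (forall i, is_open (U i)) -> (forall x, exists i, U i x) ->
    exists l : list I, forall x, exists i, In i l /\ U i x.

Definition is_continuous (T : X -> X) : Prop :=
  forall x eps, 0 < eps -> exists delta, 0 < delta /\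
    forall y, d x y < delta -> d (T x) (T y) < eps.

Inductive borel : (X -> Prop) -> Prop :=
| borel_open : forall U, is_open U -> borel U
| borel_compl : forall A, borel A -> borel (fun x => ~ A x)
| borel_union : forall A : nat -> X -> Prop,
    (forall n, borel (A n)) -> borel (fun x => exists n, A n x)
| borel_ext : forall A B, borel A -> (forall x, A x <-> B x) -> borel B.

(** Borel probability measure (values outside Borel sets are irrelevant) *)
Definition is_borel_prob (mu : (X -> Prop) -> R) : Prop :=
  (forall A B, borel A -> (forall x, A x <-> B x) -> mu A = mu B) /\
  (forall A, borel A -> 0 <= mu A) /\
  mu (fun _ => True) = 1 /\
  (forall A : nat -> X -> Prop,
     (forall n, borel (A n)) ->
     (forall n m x, n <> m -> A n x -> A m x -> False) ->
     infinite_sum (fun n => mu (A n)) (mu (fun x => exists n, A n x))).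

Definition is_T_invariant (T : X -> X) (mu : (X -> Prop) -> R) : Prop :=
  is_borel_prob mu /\ forall A, borel A -> mu (fun x => A (T x)) = mu A.

(** supp(X,T): the smallest closed set of full measure for every invariant
    measure, realised as the intersection of all such closed sets. *)
Definition supp (T : X -> X) : X -> Prop :=
  fun x => forall C, is_closed C ->
    (forall mu, is_T_invariant T mu -> mu C = 1) -> C x.

End TDS.

Fixpoint iter {X : Type} (n : nat) (T : X -> X) (x : X) : X :=
  match n with O => x | S k => T (iter k T x) end.

(** Banach density one, for F a subset of Z_+ = {0,1,2,...}.
    The interval I = {a, ..., a+len-1}; "#(F ∩ I) >= k" is expressed as the
    existence of a duplicate-free list of k elements of F ∩ I. *)
Definition banach_density_one (F : nat -> Prop) : Prop :=
  forall lambda, lambda < 1 ->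
    exists N : nat, (1 <= N)%nat /\
      forall a len : nat, (N <= len)%nat ->
        exists l : list nat, NoDup l /\
          (forall n, In n l -> (a <= n < a + len)%nat /\ F n) /\
          lambda * INR len <= INR (length l).

Definition has_density_property {X : Type} (d : X -> X -> R) (T : X -> X)
  (K : X -> Prop) : Prop :=
  forall (x : X) (U : X -> Prop), is_open X d U -> (forall y, K y -> U y) ->
    banach_density_one (fun n => U (iter n T x)).

(** Let [K] be closed with the density property and [mu]
    invariant.  If [mu K < 1], some open [U ⊇ K] still has [mu U < 1].  The
    density property says that, for all large [M], every orbit visits [U] at
    least [λ·M] times among its first [M] steps; taking the set [G] of points
    for which this holds beyond a fixed threshold (of measure close to one), a
    counting inequality and invariance give [λ·M·mu G ≲ M·mu U], which is
    impossible for [λ] close to one.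

    If the property fails for a point [x] and an open
    [U ⊇ supp], there are ever longer windows in which the orbit of [x] spends
    at most a fraction [λ < 1] of its time in [U].  An ultrafilter limit of the
    empirical frequencies on these windows is a finitely additive invariant
    content [ν] on all subsets of [X] with [ν U ≤ λ].  Using compactness,
    inner approximation by closed sets and outer approximation by open sets
    turn [ν] into an invariant Borel probability [mu] (Carathéodory) with
    [mu C ≤ ν U] for [C ⊆ U].  By compactness a finite intersection [C] of
    closed sets of full measure lies in [U], whence [1 = mu C ≤ λ < 1]. *)

From mathcomp Require filter.
From Stdlib Require Import Reals List Lra Lia Classical ClassicalEpsilon.
Set Bullet Behavior "Strict Subproofs".
Open Scope R_scope.

Fixpoint sumR (f : nat -> R) (n : nat) : R :=
  match n with O => 0 | S k => sumR f k + f k end.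

Lemma sumR_ext f g n :
  (forall i, (i < n)%nat -> f i = g i) -> sumR f n = sumR g n.
Proof.
  induction n as [|n IH]; simpl; intros H; auto.
  rewrite IH by (intros; apply H; lia). rewrite H by lia. reflexivity.
Qed.

Lemma sumR_le f g n :
  (forall i, (i < n)%nat -> f i <= g i) -> sumR f n <= sumR g n.
Proof.
  induction n as [|n IH]; simpl; intros H; [lra|].
  assert (f n <= g n) by (apply H; lia).
  assert (sumR f n <= sumR g n) by (apply IH; intros; apply H; lia).
  lra.
Qed.

Lemma sumR_const c n : sumR (fun _ => c) n = INR n * c.
Proof. induction n as [|n IH]; simpl sumR; [simpl; lra|]. rewrite IH, S_INR. lra. Qed.

Lemma sumR_mono f n m :
  (forall i, 0 <= f i) -> (n <= m)%nat -> sumR f n <= sumR f m.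
Proof. intros H Hnm. induction Hnm; [lra|]. simpl. specialize (H m). lra. Qed.

Lemma sumR_plus f g n : sumR (fun i => f i + g i) n = sumR f n + sumR g n.
Proof. induction n; simpl; lra. Qed.

Lemma sumR_telescope f g n :
  sumR (fun k => f k + g k - g (S k)) n = sumR f n + g O - g n.
Proof. induction n as [|n IH]; simpl; [lra|]. rewrite IH. lra. Qed.

Lemma sumR_f_R0 f n : sumR f (S n) = sum_f_R0 f n.
Proof. induction n as [|n IH]; [simpl; lra|]. simpl sum_f_R0. rewrite <- IH. simpl. lra. Qed.

Lemma sumR_geom e n : 0 <= e -> sumR (fun i => e / 2 ^ (S i)) n <= e.
Proof.
  intros He.
  assert (Hclosed : forall n, sumR (fun i => e / 2 ^ (S i)) n = e - e / 2 ^ n).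
  { induction n0 as [|n0 IH]; [simpl; field|].
    change (sumR (fun i => e / 2 ^ (S i)) (S n0))
      with (sumR (fun i => e / 2 ^ (S i)) n0 + e / 2 ^ (S n0)).
    rewrite IH. simpl. field. apply pow_nonzero. lra. }
  rewrite Hclosed. assert (0 < 2 ^ n) by (apply pow_lt; lra).
  assert (0 <= e / 2 ^ n) by (apply Rmult_le_pos; [lra | left; apply Rinv_0_lt_compat; lra]). lra.
Qed.

Lemma exists_floor r : 0 <= r -> exists m : nat, INR m <= r < INR m + 1.
Proof.
  intros Hr.
  assert (Hbelow : forall M : nat, r < INR M -> exists m : nat, INR m <= r < INR m + 1).
  { induction M as [|M IH]; intros HM; [simpl in HM; lra|].
    destruct (Rlt_or_le r (INR M)); auto. exists M. rewrite S_INR in HM. lra. }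
  destruct (INR_unbounded r) as [M HM]. eauto.
Qed.

Lemma inv_succ_pos m : 0 < / (INR m + 1).
Proof. apply Rinv_0_lt_compat. pose proof (pos_INR m). lra. Qed.

Lemma exists_nat_inv e : 0 < e -> exists m : nat, / (INR m + 1) < e.
Proof.
  intros He. destruct (INR_unbounded (/ e)) as [M HM]. exists M.
  assert (0 < / e) by (apply Rinv_0_lt_compat; lra).
  pose proof (pos_INR M).
  rewrite <- (Rinv_inv e). apply Rinv_lt_contravar; [nra | lra].
Qed.

Lemma Rle_epsilon a b : (forall e, 0 < e -> a <= b + e) -> a <= b.
Proof. intros H. apply Rnot_lt_le. intro Hlt. specialize (H ((a - b) / 2) ltac:(lra)). lra. Qed.

(** A total supremum operator: the least upper bound of a bounded nonempty
    set of reals (and [0] otherwise), and the dual infimum. *)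
Definition supR (E : R -> Prop) : R :=
  match excluded_middle_informative (bound E /\ exists x, E x) with
  | left h => proj1_sig (completeness E (proj1 h) (proj2 h))
  | right _ => 0
  end.

Lemma supR_spec E : bound E -> (exists x, E x) -> is_lub E (supR E).
Proof.
  intros Hb He. unfold supR. destruct excluded_middle_informative as [h|h].
  - destruct (completeness E (proj1 h) (proj2 h)); simpl; auto.
  - exfalso; tauto.
Qed.

Lemma supR_ub E x : bound E -> E x -> x <= supR E.
Proof. intros Hb Hx. apply (supR_spec E Hb (ex_intro _ x Hx)); auto. Qed.

Lemma supR_least E b : (exists x, E x) -> (forall x, E x -> x <= b) -> supR E <= b.
Proof. intros He Hb. apply (supR_spec E (ex_intro _ b Hb) He). intros x Hx; auto. Qed.

Lemma supR_approx E e : bound E -> (exists x, E x) -> 0 < e ->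
  exists x, E x /\ supR E - e < x.
Proof.
  intros Hb He Hpos. apply NNPP. intro Hn.
  assert (supR E <= supR E - e); [|lra].
  apply supR_least; auto. intros x Hx. apply Rnot_lt_le. intro; apply Hn; eauto.
Qed.

Definition infR (E : R -> Prop) : R := - supR (fun t => E (- t)).

Lemma infR_lb E x : (exists b, forall y, E y -> b <= y) -> E x -> infR E <= x.
Proof.
  intros [b Hb] Hx. unfold infR. assert (- x <= supR (fun t => E (- t))); [|lra].
  apply supR_ub; [|rewrite Ropp_involutive; auto].
  exists (- b). intros t Ht. specialize (Hb _ Ht). lra.
Qed.

Lemma infR_greatest E b : (exists x, E x) -> (forall x, E x -> b <= x) -> b <= infR E.
Proof.
  intros [x Hx] Hb. unfold infR. assert (supR (fun t => E (- t)) <= - b); [|lra].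
  apply supR_least; [exists (- x); rewrite Ropp_involutive; auto|].
  intros t Ht. specialize (Hb _ Ht). lra.
Qed.

Lemma infR_approx E e : (exists b, forall y, E y -> b <= y) -> (exists x, E x) -> 0 < e ->
  exists x, E x /\ x < infR E + e.
Proof.
  intros [b Hb] [x0 Hx0] He.
  destruct (supR_approx (fun t => E (- t)) e) as [t [Ht1 Ht2]]; auto.
  - exists (- b). intros t Ht. specialize (Hb _ Ht). lra.
  - exists (- x0). rewrite Ropp_involutive; auto.
  - exists (- t). split; auto. unfold infR. lra.
Qed.

Lemma least_index (P : nat -> Prop) n :
  P n -> exists m, P m /\ forall j, (j < m)%nat -> ~ P j.
Proof.
  revert n. induction n as [n IH] using (well_founded_ind Wf_nat.lt_wf). intros Pn.
  destruct (classic (exists j, (j < n)%nat /\ P j)) as [[j [Hj Pj]]|Hno].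
  - exact (IH j Hj Pj).
  - exists n; split; auto. intros j Hj Pj; apply Hno; eauto.
Qed.

(** ** Metric topology and Borel sets *)

Section Metric.
Variable X : Type.
Variable d : X -> X -> R.
Hypothesis Hm : is_metric X d.

Lemma d_nonneg x y : 0 <= d x y. Proof. apply (proj1 Hm). Qed.
Lemma d_refl x : d x x = 0. Proof. apply (proj1 (proj2 Hm)). auto. Qed.
Lemma d_sym x y : d x y = d y x. Proof. apply (proj1 (proj2 (proj2 Hm))). Qed.
Lemma d_tri x y z : d x z <= d x y + d y z. Proof. apply (proj2 (proj2 (proj2 Hm))). Qed.

Lemma open_ext U V : is_open X d U -> (forall x, U x <-> V x) -> is_open X d V.
Proof.
  intros HU H x Hx. destruct (HU x) as [e [He H']]; [apply H; auto|].
  exists e; split; auto. intros; apply H; auto.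
Qed.

Lemma closed_ext U V : is_closed X d U -> (forall x, U x <-> V x) -> is_closed X d V.
Proof. intros HU H. apply (open_ext _ _ HU). intros x; rewrite (H x); tauto. Qed.

Lemma open_True : is_open X d (fun _ => True).
Proof. intros x _. exists 1; split; auto; lra. Qed.

Lemma open_False : is_open X d (fun _ => False).
Proof. intros x []. Qed.

Lemma closed_True : is_closed X d (fun _ => True).
Proof. apply (open_ext _ _ open_False). tauto. Qed.

Lemma closed_False : is_closed X d (fun _ => False).
Proof. apply (open_ext _ _ open_True). tauto. Qed.

Lemma open_inter U V :
  is_open X d U -> is_open X d V -> is_open X d (fun x => U x /\ V x).
Proof.
  intros HU HV x [Ux Vx].
  destruct (HU x Ux) as [e1 [He1 H1]], (HV x Vx) as [e2 [He2 H2]].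
  exists (Rmin e1 e2). split; [apply Rmin_pos; auto|].
  intros y Hy. split.
  - apply H1. eapply Rlt_le_trans; eauto; apply Rmin_l.
  - apply H2. eapply Rlt_le_trans; eauto; apply Rmin_r.
Qed.

Lemma open_cunion (V : nat -> X -> Prop) :
  (forall n, is_open X d (V n)) -> is_open X d (fun x => exists n, V n x).
Proof.
  intros H x [n Hn]. destruct (H n x Hn) as [e [He He']].
  exists e; split; auto. intros y Hy; exists n; auto.
Qed.

Lemma open_ball c r : is_open X d (fun y => d c y < r).
Proof.
  intros x Hx. exists (r - d c x). split; [lra|].
  intros y Hy. pose proof (d_tri c x y). lra.
Qed.

Lemma closed_compl_open U : is_open X d U -> is_closed X d (fun x => ~ U x).
Proof. intros HU. apply (open_ext _ _ HU). intros; tauto. Qed.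

Lemma closed_inter_all (P : (X -> Prop) -> Prop) :
  (forall C, P C -> is_closed X d C) -> is_closed X d (fun x => forall C, P C -> C x).
Proof.
  intros H x Hx. apply not_all_ex_not in Hx as [C HC].
  apply imply_to_and in HC as [PC nCx].
  destruct (H C PC x nCx) as [e [He He']]. exists e; split; auto.
  intros y Hy Hall. exact (He' y Hy (Hall C PC)).
Qed.

Lemma closed_union F G :
  is_closed X d F -> is_closed X d G -> is_closed X d (fun x => F x \/ G x).
Proof. intros HF HG. apply (open_ext _ _ (open_inter _ _ HF HG)). intros; tauto. Qed.

Lemma closed_inter F G :
  is_closed X d F -> is_closed X d G -> is_closed X d (fun x => F x /\ G x).
Proof.
  intros HF HG. apply (closed_ext (fun x => forall C, (C = F \/ C = G) -> C x)).
  - apply closed_inter_all. intros C [-> | ->]; auto.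
  - intros x; split; [intros H; split; apply H; auto|].
    intros [H1 H2] C [-> | ->]; auto.
Qed.

Lemma borel_closed F : is_closed X d F -> borel X d F.
Proof.
  intros HF. apply (borel_ext _ _ (fun x => ~ ~ F x)).
  - apply borel_compl, borel_open; auto.
  - intros; tauto.
Qed.

Lemma borel_True : borel X d (fun _ => True). Proof. apply borel_open, open_True. Qed.
Lemma borel_False : borel X d (fun _ => False). Proof. apply borel_open, open_False. Qed.

Lemma borel_or A B : borel X d A -> borel X d B -> borel X d (fun x => A x \/ B x).
Proof.
  intros HA HB.
  apply (borel_ext _ _ (fun x => exists n, (match n with O => A | _ => B end) x)).
  - apply borel_union. intros [|n]; auto.
  - intros x; split; [intros [[|n] H]; auto|].
    intros [H|H]; [exists O | exists 1%nat]; auto.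
Qed.

Lemma borel_inter A B : borel X d A -> borel X d B -> borel X d (fun x => A x /\ B x).
Proof.
  intros HA HB. apply (borel_ext _ _ (fun x => ~ (~ A x \/ ~ B x))).
  - apply borel_compl, borel_or; apply borel_compl; auto.
  - intros x. tauto.
Qed.

Lemma borel_cinter (C : nat -> X -> Prop) :
  (forall n, borel X d (C n)) -> borel X d (fun x => forall n, C n x).
Proof.
  intros H. apply (borel_ext _ _ (fun x => ~ exists n, ~ C n x)).
  - apply borel_compl, borel_union. intros n; apply borel_compl; auto.
  - intros x; split; [intros H1 n; apply NNPP; intro; apply H1; eauto|].
    intros H1 [n Hn]; auto.
Qed.

Lemma borel_cond (P : Prop) A : borel X d A -> borel X d (fun x => P -> A x).
Proof.
  intros H. destruct (classic P) as [p|np].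
  - apply (borel_ext _ _ _ _ H). intros x; split; auto.
  - apply (borel_ext _ _ _ _ borel_True). intros x; split; auto. intros _ p; tauto.
Qed.

Lemma borel_finter (C : nat -> X -> Prop) m :
  (forall n, borel X d (C n)) -> borel X d (fun x => forall j, (j < m)%nat -> C j x).
Proof. intros H. apply borel_cinter. intros j. apply borel_cond, H. Qed.

Lemma borel_funion (C : nat -> X -> Prop) m :
  (forall n, borel X d (C n)) -> borel X d (fun x => exists j, (j < m)%nat /\ C j x).
Proof.
  intros H. apply (borel_ext _ _ (fun x => ~ forall j, (j < m)%nat -> ~ C j x)).
  - apply borel_compl, borel_finter. intros; apply borel_compl, H.
  - intros x; split; [|intros [j [Hj Cj]] Hall; exact (Hall j Hj Cj)].
    intros Hn. apply NNPP; intro Hno. apply Hn. intros j Hj Cj. apply Hno; eauto.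
Qed.

End Metric.

(** ** Continuous maps *)

Section Continuous.
Variable X : Type.
Variable d : X -> X -> R.
Hypothesis Hm : is_metric X d.
Variable T : X -> X.
Hypothesis Hcont : is_continuous X d T.

Lemma open_preimage U : is_open X d U -> is_open X d (fun x => U (T x)).
Proof.
  intros HU x Hx. destruct (HU _ Hx) as [e [He H]].
  destruct (Hcont x e He) as [dl [Hd H']]. exists dl; split; auto.
Qed.

Lemma borel_preimage A : borel X d A -> borel X d (fun x => A (T x)).
Proof.
  intros HA; induction HA as [U HU|A' HA IH|F HF IH|A' B' HA IH Hx].
  - apply borel_open, open_preimage; auto.
  - apply borel_compl; auto.
  - apply (borel_union _ _ (fun n x => F n (T x))); auto.
  - apply (borel_ext _ _ _ _ IH). intros; auto.
Qed.

Lemma borel_preimage_iter n A : borel X d A -> borel X d (fun x => A (iter n T x)).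
Proof.
  revert A; induction n as [|n IH]; intros A HA; simpl; auto.
  apply (IH (fun y => A (T y))). apply borel_preimage; auto.
Qed.

Hypothesis Hcpt : is_compact X d.

(** On a compact space the continuous image of a closed set is closed: if
    [y] is not in [T(K)], cover [K] by balls on which [T] stays at distance
    [> d(Tz,y)/2] of [T z]; a finite subcover gives a ball around [y] missing
    [T(K)]. *)
Lemma image_closed K : is_closed X d K -> is_closed X d (fun y => exists z, K z /\ y = T z).
Proof.
  intros HK y Hy.
  assert (Hpos : forall z : {z | K z}, 0 < d (T (proj1_sig z)) y / 2).
  { intros [z Kz]. simpl. assert (d (T z) y <> 0).
    { intro H0. apply (proj1 (proj2 Hm)) in H0. apply Hy; eauto. }
    pose proof (d_nonneg _ _ Hm (T z) y). lra. }
  set (delta := fun z : {z | K z} =>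
    proj1_sig (constructive_indefinite_description _ (Hcont (proj1_sig z) _ (Hpos z)))).
  assert (Hdelta : forall z, 0 < delta z /\ forall y', d (proj1_sig z) y' < delta z ->
            d (T (proj1_sig z)) (T y') < d (T (proj1_sig z)) y / 2).
  { intros z. unfold delta. destruct constructive_indefinite_description; auto. }
  set (G := fun i : option {z | K z} => match i with
    | None => fun x => ~ K x
    | Some z => fun x => d (proj1_sig z) x < delta z end).
  destruct (Hcpt _ G) as [l Hl].
  { intros [z|]; simpl; [apply open_ball; exact Hm | apply HK]. }
  { intros x. destruct (classic (K x)) as [Kx|nKx]; [|exists None; auto].
    exists (Some (exist _ x Kx)). simpl. rewrite (d_refl _ _ Hm). apply Hdelta. }
  set (r := fold_right (fun i acc => match i with
    | Some z => Rmin (d (T (proj1_sig z)) y / 2) acc | None => acc end) 1 l).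
  assert (Hr : 0 < r /\ forall z, In (Some z) l -> r <= d (T (proj1_sig z)) y / 2).
  { unfold r. clear Hl. induction l as [|[z|] l [IH1 IH2]]; simpl.
    - split; [lra | tauto].
    - split; [apply Rmin_pos; auto|]. intros z' [H|H].
      + inversion H; subst. apply Rmin_l.
      + eapply Rle_trans; [apply Rmin_r | auto].
    - split; auto. intros z' [H|H]; [discriminate | auto]. }
  destruct Hr as [Hr1 Hr2]. exists r. split; auto.
  intros y' Hy' [z' [Kz' ->]].
  destruct (Hl z') as [[z|] [Hin Hz]]; simpl in Hz; [|contradiction].
  destruct (Hdelta z) as [_ Hd]. specialize (Hd z' Hz). specialize (Hr2 z Hin).
  pose proof (d_tri _ _ Hm (T (proj1_sig z)) (T z') y).
  rewrite (d_sym _ _ Hm (T z') y) in H. lra.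
Qed.

End Continuous.

(** ** Borel probability measures *)

Section BorelProbability.
Variable X : Type.
Variable d : X -> X -> R.
Hypothesis Hm : is_metric X d.
Variable mu : (X -> Prop) -> R.
Hypothesis Hp : is_borel_prob X d mu.

Lemma mu_ext A B : borel X d A -> (forall x, A x <-> B x) -> mu A = mu B.
Proof. apply (proj1 Hp). Qed.

Lemma mu_nonneg A : borel X d A -> 0 <= mu A.
Proof. apply (proj1 (proj2 Hp)). Qed.

Lemma mu_True : mu (fun _ => True) = 1.
Proof. apply (proj1 (proj2 (proj2 Hp))). Qed.

Lemma mu_sigma (A : nat -> X -> Prop) : (forall n, borel X d (A n)) ->
  (forall n m x, n <> m -> A n x -> A m x -> False) ->
  infinite_sum (fun n => mu (A n)) (mu (fun x => exists n, A n x)).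
Proof. apply (proj2 (proj2 (proj2 Hp))). Qed.

Lemma infinite_sum_eventually f c N :
  (forall n, (n >= N)%nat -> sum_f_R0 f n = c) -> infinite_sum f c.
Proof.
  intros H e He. exists N. intros n Hn. rewrite H by auto.
  unfold R_dist. rewrite Rminus_diag, Rabs_R0. auto.
Qed.

(** The empty set is the disjoint union of countably many empty sets, so its
    measure [c] satisfies [n·c → c], forcing [c = 0]. *)
Lemma mu_empty : mu (fun _ => False) = 0.
Proof.
  pose proof (mu_sigma (fun _ _ => False) (fun _ => borel_False _ _)
                (fun _ _ _ _ H _ => H)) as H. cbv beta in H.
  rewrite (mu_ext (fun x => exists _ : nat, False) (fun _ => False)) in H.
  2: { apply (borel_ext _ _ _ _ (borel_False _ _)). intros x; split; [intros []|intros [_ []]]. }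
  2: { intros x; split; [intros [_ []]|intros []]. }
  set (c := mu (fun _ => False)) in *.
  assert (0 <= c) by (apply mu_nonneg, borel_False).
  destruct (Req_dec c 0) as [|Hc]; auto. exfalso.
  destruct (H (c / 2)) as [N HN]; [lra|]. specialize (HN (S N) ltac:(lia)).
  rewrite sum_cte in HN. unfold R_dist in HN. rewrite S_INR, S_INR in HN.
  pose proof (pos_INR N). rewrite Rabs_right in HN; nra.
Qed.

Lemma mu_add A B : borel X d A -> borel X d B -> (forall x, A x -> B x -> False) ->
  mu (fun x => A x \/ B x) = mu A + mu B.
Proof.
  intros HA HB Hd.
  set (Sq := fun n : nat => match n with O => A | 1%nat => B | _ => fun _ => False end).
  assert (HS : forall n, borel X d (Sq n)) by (intros [|[|n]]; simpl; auto; apply borel_False).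
  assert (Hdisj : forall n m x, n <> m -> Sq n x -> Sq m x -> False).
  { intros [|[|n]] [|[|m]] x Hnm; simpl; try tauto; try lia; eauto. }
  pose proof (mu_sigma Sq HS Hdisj) as H.
  rewrite (mu_ext _ (fun x => A x \/ B x)) in H.
  2: { apply borel_union; auto. }
  2: { intros x; split; [intros [[|[|n]] Hn]; simpl in Hn; tauto|].
       intros [H1|H1]; [exists O | exists 1%nat]; auto. }
  apply (uniqueness_sum _ _ _ H). apply (infinite_sum_eventually _ _ 1%nat).
  intros n Hn. induction Hn as [|m Hnm IH]; [simpl; lra|].
  simpl sum_f_R0. rewrite IH. destruct m; [lia|]. simpl. rewrite mu_empty. lra.
Qed.

Lemma mu_finite_add (D : nat -> X -> Prop) n : (forall n, borel X d (D n)) ->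
  (forall n m x, n <> m -> D n x -> D m x -> False) ->
  mu (fun x => exists j, (j < n)%nat /\ D j x) = sumR (fun j => mu (D j)) n.
Proof.
  intros HD Hdis. induction n as [|n IH]; simpl.
  - rewrite (mu_ext _ (fun _ => False)), mu_empty; auto.
    + apply borel_funion; auto.
    + intros x; split; [intros [j [Hj _]]; lia | tauto].
  - rewrite <- IH, <- mu_add.
    + apply mu_ext; [apply borel_funion; auto|]. intros x; split.
      * intros [j [Hj H1]]. destruct (Nat.eq_dec j n) as [->|]; auto.
        left; exists j; split; auto; lia.
      * intros [[j [Hj H1]]|H1]; [exists j | exists n]; split; auto.
    + apply borel_funion; auto.
    + auto.
    + intros x [j [Hj H1]] H2. apply (Hdis j n x); auto; lia.
Qed.

Lemma mu_split A B : borel X d A -> borel X d B ->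
  mu B = mu (fun x => B x /\ A x) + mu (fun x => B x /\ ~ A x).
Proof.
  intros HA HB. rewrite <- mu_add.
  - apply mu_ext; auto. intros x; split; [|tauto]. intros Bx; destruct (classic (A x)); auto.
  - apply borel_inter; auto.
  - apply borel_inter; auto; apply borel_compl; auto.
  - intros x [_ H1] [_ H2]; auto.
Qed.

Lemma mu_mono A B : borel X d A -> borel X d B -> (forall x, A x -> B x) -> mu A <= mu B.
Proof.
  intros HA HB H. rewrite (mu_split A B), (mu_ext (fun x => B x /\ A x) A); auto.
  - assert (0 <= mu (fun x => B x /\ ~ A x)); [|lra].
    apply mu_nonneg, borel_inter; auto; apply borel_compl; auto.
  - apply borel_inter; auto.
  - intros x; split; [tauto|]. intros Ax; split; auto.
Qed.

Lemma mu_compl A : borel X d A -> mu (fun x => ~ A x) = 1 - mu A.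
Proof.
  intros HA. pose proof (mu_split A (fun _ => True) HA (borel_True _ _)) as H.
  rewrite mu_True, (mu_ext _ A), (mu_ext (fun x => True /\ ~ A x) (fun x => ~ A x)) in H;
    try lra.
  - apply borel_inter; [apply borel_True | apply borel_compl; auto].
  - tauto.
  - apply borel_inter; auto; apply borel_True.
  - tauto.
Qed.

Lemma mu_le1 A : borel X d A -> mu A <= 1.
Proof.
  intros HA. pose proof (mu_compl A HA).
  pose proof (mu_nonneg _ (borel_compl _ _ _ HA)). lra.
Qed.

Lemma mu_incl_excl A B : borel X d A -> borel X d B ->
  mu (fun x => A x \/ B x) + mu (fun x => A x /\ B x) = mu A + mu B.
Proof.
  intros HA HB.
  assert (HAB : borel X d (fun x => A x \/ B x)) by (apply borel_or; auto).
  rewrite (mu_split A (fun x => A x \/ B x)), (mu_split A B); auto.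
  rewrite (mu_ext (fun x => (A x \/ B x) /\ A x) A),
          (mu_ext (fun x => (A x \/ B x) /\ ~ A x) (fun x => B x /\ ~ A x)),
          (mu_ext (fun x => B x /\ A x) (fun x => A x /\ B x)); try lra; try tauto.
  - apply borel_inter; auto.
  - apply borel_inter; auto; apply borel_compl; auto.
  - apply borel_inter; auto.
Qed.

Lemma mu_inter_full A B : borel X d A -> borel X d B -> mu A = 1 -> mu B = 1 ->
  mu (fun x => A x /\ B x) = 1.
Proof.
  intros HA HB H1 H2. pose proof (mu_incl_excl A B HA HB).
  pose proof (mu_le1 _ (borel_or _ _ _ _ HA HB)).
  pose proof (mu_le1 _ (borel_inter _ _ _ _ HA HB)).
  assert (mu A <= mu (fun x => A x \/ B x)) by (apply mu_mono; auto; apply borel_or; auto).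
  lra.
Qed.

Lemma mu_cont_below (C : nat -> X -> Prop) e : (forall n, borel X d (C n)) ->
  (forall n x, C n x -> C (S n) x) -> 0 < e ->
  exists N, mu (fun x => exists n, C n x) - e < mu (C N).
Proof.
  intros HC Hinc He.
  set (D := fun n x => C n x /\ forall j, (j < n)%nat -> ~ C j x).
  assert (HD : forall n, borel X d (D n)).
  { intros n. apply borel_inter; auto. apply borel_finter. intros; apply borel_compl; auto. }
  assert (Hdis : forall n m x, n <> m -> D n x -> D m x -> False).
  { intros n m x Hnm [H1 H2] [H3 H4].
    destruct (Nat.lt_gt_cases n m) as [[H|H] _]; auto; [apply (H4 n) | apply (H2 m)]; auto. }
  assert (Hmono : forall n m x, (n <= m)%nat -> C n x -> C m x).
  { intros n m x H; induction H; auto. }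
  assert (Hfirst : forall N x, (exists j, (j < S N)%nat /\ D j x) <-> C N x).
  { intros N x; split.
    - intros [j [Hj [H1 _]]]. apply (Hmono j); auto; lia.
    - intros H1. destruct (least_index (fun n => C n x) N H1) as [m [Cm Hbefore]].
      exists m. split; [|split; auto].
      destruct (Nat.le_gt_cases m N); [lia|]. exfalso. apply (Hbefore N); auto. }
  pose proof (mu_sigma D HD Hdis) as Hs.
  rewrite (mu_ext _ (fun x => exists n, C n x)) in Hs.
  2: { apply borel_union; auto. }
  2: { intros x; split; [intros [n [Hn _]]; eauto|].
       intros [n Hn]. apply (Hfirst n x) in Hn as [j [_ Hj]]. eauto. }
  destruct (Hs e He) as [N HN]. exists N. specialize (HN N (le_n _)).
  rewrite <- sumR_f_R0, <- mu_finite_add, (mu_ext _ (C N)) in HN; auto.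
  - unfold R_dist in HN. apply Rabs_def2 in HN. lra.
  - apply borel_funion; auto.
Qed.

(** [at_least B n k x] holds when at least [k] of the events
    [B 0 x, ..., B (n-1) x] hold.  The measures of these sets add up to the
    sum of the measures of the [B i] (a layer-cake formula), so a set [G]
    whose points all lie in [k] of the [B i] satisfies
    [k · mu G <= sum_(i<n) mu (B i)]. *)
Variable B : nat -> X -> Prop.
Hypothesis HB : forall n, borel X d (B n).

Fixpoint at_least (n k : nat) : X -> Prop :=
  match n with
  | O => fun _ => k = O
  | S n' => match k with
            | O => fun _ => True
            | S k' => fun x => at_least n' (S k') x \/ (at_least n' k' x /\ B n' x)
            end
  end.

Lemma at_least_borel n k : borel X d (at_least n k).
Proof.
  revert k; induction n as [|n IH]; intros [|k]; simpl.
  - apply (borel_ext _ _ _ _ (borel_True _ _)); intros; tauto.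
  - apply (borel_ext _ _ _ _ (borel_False _ _)); intros; split; [tauto | discriminate].
  - apply borel_True.
  - apply borel_or; auto. apply borel_inter; auto.
Qed.

Lemma at_least_0 n x : at_least n 0 x.
Proof. destruct n; simpl; auto. Qed.

Lemma at_least_S n k x : at_least n (S k) x -> at_least n k x.
Proof.
  revert k; induction n as [|n IH]; intros k; simpl; [discriminate|].
  destruct k; auto. intros [H|[H1 H2]]; [left | right]; auto.
Qed.

Lemma at_least_mono n k k' x : (k <= k')%nat -> at_least n k' x -> at_least n k x.
Proof. intros H; induction H; auto. intros; apply IHle, at_least_S; auto. Qed.

Lemma at_least_bound n k x : at_least n k x -> (k <= n)%nat.
Proof.
  revert k; induction n as [|n IH]; intros [|k]; simpl; try lia.
  intros [H|[H _]]; apply IH in H; lia.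
Qed.

Lemma at_least_of_list n (l : list nat) x : NoDup l ->
  (forall i, In i l -> (i < n)%nat /\ B i x) -> at_least n (length l) x.
Proof.
  revert l; induction n as [|n IH]; intros l Hnd Hl.
  - destruct l as [|i l]; simpl; auto. destruct (Hl i (or_introl eq_refl)); lia.
  - destruct (in_dec Nat.eq_dec n l) as [Hin|Hnin].
    + destruct (in_split _ _ Hin) as [l1 [l2 ->]].
      rewrite length_app. simpl length. rewrite Nat.add_succ_r. simpl at_least. right. split.
      * rewrite <- length_app. apply IH; [apply (NoDup_remove_1 _ _ _ Hnd)|].
        intros i Hi.
        assert (Hi' : In i (l1 ++ n :: l2)) by (apply in_app_or in Hi; apply in_or_app; simpl; tauto).
        destruct (Hl i Hi') as [H1 H2]. split; auto.
        assert (i <> n) by (intros ->; apply (NoDup_remove_2 _ _ _ Hnd); auto). lia.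
      * apply (Hl n). apply in_or_app; simpl; auto.
    + assert (Hrec : at_least n (length l) x).
      { apply IH; auto. intros i Hi. destruct (Hl i Hi). split; auto.
        assert (i <> n) by (intros ->; auto). lia. }
      destruct (length l); [apply at_least_0 | simpl; left; auto].
Qed.

Lemma at_least_step n k :
  mu (at_least (S n) (S k)) = mu (at_least n (S k)) + mu (fun x => at_least n k x /\ B n x)
                              - mu (fun x => at_least n (S k) x /\ B n x).
Proof.
  pose proof (mu_incl_excl (at_least n (S k)) (fun x => at_least n k x /\ B n x)
                (at_least_borel n (S k)) (borel_inter _ _ _ _ (at_least_borel n k) (HB n))) as H.
  cbv beta in H. simpl at_least.
  rewrite (mu_ext (fun x => at_least n (S k) x /\ at_least n k x /\ B n x)
                  (fun x => at_least n (S k) x /\ B n x)) in H.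
  - lra.
  - apply borel_inter; [apply at_least_borel | apply borel_inter; auto; apply at_least_borel].
  - intros x; split; [tauto|]. intros [H1 H2]. repeat split; auto. apply at_least_S; auto.
Qed.

Lemma layer_cake n : sumR (fun i => mu (B i)) n = sumR (fun k => mu (at_least n (S k))) n.
Proof.
  induction n as [|n IH]; [reflexivity|].
  change (sumR (fun i => mu (B i)) (S n)) with (sumR (fun i => mu (B i)) n + mu (B n)).
  rewrite IH, (sumR_ext (fun k => mu (at_least (S n) (S k))) (fun k => mu (at_least n (S k))
                 + mu (fun x => at_least n k x /\ B n x) - mu (fun x => at_least n (S k) x /\ B n x)))
    by (intros; apply at_least_step).
  rewrite sumR_telescope. simpl sumR.
  assert (Hempty : forall P : X -> Prop, borel X d P -> (forall x, P x -> at_least n (S n) x) ->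
            mu P = 0).
  { intros P HP HPn. rewrite (mu_ext P (fun _ => False)); [apply mu_empty | auto|].
    intros x; split; [|tauto]. intros Px. apply HPn, at_least_bound in Px. lia. }
  rewrite (Hempty (at_least n (S n))), (Hempty (fun x => at_least n (S n) x /\ B n x)),
          (mu_ext (fun x => at_least n 0 x /\ B n x) (B n)).
  - lra.
  - apply borel_inter; auto; apply at_least_borel.
  - intros x; split; [tauto|]. intros; split; auto; apply at_least_0.
  - apply borel_inter; auto; apply at_least_borel.
  - tauto.
  - apply at_least_borel.
  - auto.
Qed.

Lemma count_inequality (G : X -> Prop) n k : borel X d G ->
  (forall x, G x -> at_least n k x) -> INR k * mu G <= sumR (fun i => mu (B i)) n.
Proof.
  intros HG HGk. rewrite layer_cake.
  assert (Hnonneg : forall i, 0 <= mu (at_least n (S i))) by (intros; apply mu_nonneg, at_least_borel).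
  destruct (Nat.le_gt_cases k n) as [Hkn|Hnk].
  - apply Rle_trans with (sumR (fun i => mu (at_least n (S i))) k); [|apply sumR_mono; auto].
    rewrite <- sumR_const. apply sumR_le. intros i Hi. apply mu_mono; auto.
    + apply at_least_borel.
    + intros x Gx. apply (at_least_mono _ _ k); [lia | auto].
  - rewrite (mu_ext G (fun _ => False)), mu_empty; auto.
    + rewrite Rmult_0_r, <- (Rmult_0_r (INR n)), <- sumR_const. apply sumR_le; auto.
    + intros x; split; [|tauto]. intros Gx. apply HGk, at_least_bound in Gx. lia.
Qed.

End BorelProbability.

(** ** Minimality: closed sets with the density property have full measure *)

Section Minimality.
Variable X : Type.
Variable d : X -> X -> R.
Hypothesis Hm : is_metric X d.
Variable T : X -> X.
Hypothesis Hcont : is_continuous X d T.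
Variable mu : (X -> Prop) -> R.
Hypothesis Hinv : is_T_invariant X d T mu.

Let Hp : is_borel_prob X d mu := proj1 Hinv.

(** Outer regularity at closed sets, in the weak form needed here: a closed
    set of measure [< 1] has an open neighbourhood of measure [< 1] (one of
    its [1/(m+1)]-neighbourhoods, by continuity from below of the complements). *)
Lemma open_nbhd_small K : is_closed X d K -> mu K < 1 ->
  exists U, is_open X d U /\ (forall y, K y -> U y) /\ mu U < 1.
Proof.
  intros HK Hlt.
  set (U := fun m y => exists z, K z /\ d y z < / (INR m + 1)).
  assert (HUo : forall m, is_open X d (U m)).
  { intros m y [z [Kz Hz]]. exists (/ (INR m + 1) - d y z). split; [lra|].
    intros y' Hy'. exists z. split; auto.
    pose proof (d_tri _ _ Hm y' y z). rewrite (d_sym _ _ Hm y' y) in H. lra. }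
  assert (HKU : forall m y, K y -> U m y).
  { intros m y Ky. exists y. rewrite (d_refl _ _ Hm). split; auto. apply inv_succ_pos. }
  assert (HKb : borel X d K) by (apply borel_closed; auto).
  destruct (mu_cont_below _ _ mu Hp (fun m y => ~ U m y) ((1 - mu K) / 2)) as [N HN].
  - intros n; apply borel_compl, borel_open; auto.
  - intros n x Hn [z [Kz Hz]]. apply Hn. exists z; split; auto. eapply Rlt_le_trans; eauto.
    apply Rinv_le_contravar; [pose proof (pos_INR n); lra | rewrite S_INR; lra].
  - lra.
  - exists (U N). split; [|split]; auto.
    rewrite (mu_ext _ _ _ Hp _ (fun x => ~ K x)) in HN.
    + rewrite (mu_compl _ _ mu Hp) in HN by auto.
      rewrite (mu_compl _ _ mu Hp) in HN by (apply borel_open; auto). lra.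
    + apply borel_union. intros n; apply borel_compl, borel_open; auto.
    + intros x; split; [intros [n Hn] Kx; apply Hn, HKU; auto|].
      intros nKx. destruct (HK x nKx) as [e [He He']].
      destruct (exists_nat_inv e He) as [n Hn].
      exists n. intros [z [Kz Hz]]. apply (He' z); auto. lra.
Qed.

Lemma mu_iter_inv U n : borel X d U -> mu (fun x => U (iter n T x)) = mu U.
Proof.
  revert U; induction n as [|n IH]; intros U HU; [reflexivity|].
  simpl. rewrite (IH (fun y => U (T y))); [apply Hinv; auto | apply borel_preimage; auto].
Qed.

Definition visits_often (U : X -> Prop) (lam : R) (N : nat) (x : X) : Prop :=
  forall M, (N <= M)%nat -> forall k, INR k <= lam * INR M ->
    at_least X (fun i y => U (iter i T y)) M k x.

Lemma visits_often_borel U lam N : borel X d U -> borel X d (visits_often U lam N).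
Proof.
  intros HU. apply borel_cinter. intros M. apply borel_cond, borel_cinter. intros k.
  apply borel_cond, at_least_borel. intros i; apply borel_preimage_iter; auto.
Qed.

Lemma density_visits_often K U lam : has_density_property d T K ->
  is_open X d U -> (forall y, K y -> U y) -> lam < 1 ->
  forall x, exists N, visits_often U lam N x.
Proof.
  intros Hdens HUo HKU Hlam x.
  destruct (Hdens x U HUo HKU lam Hlam) as [N [_ HN]]. exists N.
  intros M HM k Hk. destruct (HN 0%nat M HM) as [l [Hnd [Hl Hlen]]].
  apply (at_least_mono _ _ _ _ (length l)); [apply INR_le; lra|].
  apply at_least_of_list; auto. intros i Hi. destruct (Hl i Hi). split; auto. lia.
Qed.

Lemma visits_often_measure K U lam e : has_density_property d T K ->
  is_open X d U -> (forall y, K y -> U y) -> lam < 1 -> 0 < e ->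
  exists N, 1 - e < mu (visits_often U lam N).
Proof.
  intros Hdens HUo HKU Hlam He.
  assert (HUb : borel X d U) by (apply borel_open; auto).
  destruct (mu_cont_below _ _ mu Hp (visits_often U lam) e) as [N HN]; auto.
  - intros; apply visits_often_borel; auto.
  - intros n x Hx M HM. apply Hx. lia.
  - exists N. rewrite (mu_ext _ _ _ Hp _ (fun _ => True)), (mu_True _ _ mu Hp) in HN; auto.
    + apply borel_union; intros; apply visits_often_borel; auto.
    + intros x; split; auto. intros _. apply (density_visits_often K); auto.
Qed.

(** The arithmetic behind minimality: with [c < 1], [η = (1-c)/3] and
    [λ = 1-η], a horizon [M] with [m > λM - 1] visits counted on a set of
    measure [g > 1-η] and [m·g <= M·c] must satisfy [M·η < 1]. *)
Lemma counting_gap c g M m : 0 <= c < 1 -> 0 <= m ->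
  (1 - (1 - c) / 3) * M - 1 < m -> 1 - (1 - c) / 3 < g -> m * g <= M * c ->
  0 <= M -> M * ((1 - c) / 3) < 1.
Proof.
  intros Hc Hm0 Hfloor Hg Hmass HM.
  assert (Heta : 0 < (1 - c) / 3 < 1) by lra.
  assert (Hlow1 : ((1 - (1 - c) / 3) * M - 1) * (1 - (1 - c) / 3) < m * (1 - (1 - c) / 3))
    by (apply Rmult_lt_compat_r; lra).
  assert (Hlow2 : m * (1 - (1 - c) / 3) <= m * g) by (apply Rmult_le_compat_l; lra).
  assert (0 <= M * ((1 - c) / 3) * ((1 - c) / 3)) by (apply Rmult_le_pos; [apply Rmult_le_pos|]; lra).
  nra.
Qed.

(** If [mu K < 1], take [U ⊇ K] open with [c := mu U < 1], [η := (1-c)/3]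
    and [λ := 1-η]; let [G] be the set of points visiting [U] often from some
    [N] on, of measure [> 1-η].  For [M >= N] with [M·η >= 1] and
    [m := ⌊λ M⌋], the counting inequality and invariance give [m·mu G <= M·c],
    contradicting [counting_gap]. *)
Lemma density_full_measure K : is_closed X d K -> has_density_property d T K -> mu K = 1.
Proof.
  intros HK Hdens.
  assert (HKb : borel X d K) by (apply borel_closed; auto).
  destruct (Req_dec (mu K) 1) as [|HK1]; auto. exfalso.
  assert (HKlt : mu K < 1) by (pose proof (mu_le1 _ _ mu Hp K HKb); lra).
  destruct (open_nbhd_small K HK HKlt) as [U [HUo [HKU HU1]]].
  assert (HUb : borel X d U) by (apply borel_open; auto).
  assert (Hc0 : 0 <= mu U) by (apply (mu_nonneg _ _ mu Hp); auto).
  set (eta := (1 - mu U) / 3). set (lam := 1 - eta).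
  destruct (visits_often_measure K U lam eta) as [N HN]; auto; try (unfold lam, eta; lra).
  destruct (INR_unbounded (/ eta)) as [M0 HM0].
  set (M := Nat.max N M0).
  assert (HMeta : 1 <= INR M * eta).
  { assert (INR M0 <= INR M) by (apply le_INR; unfold M; lia).
    assert (/ eta * eta = 1) by (field; unfold eta; lra).
    assert (0 < eta) by (unfold eta; lra). nra. }
  destruct (exists_floor (lam * INR M)) as [m [Hm1 Hm2]].
  { apply Rmult_le_pos; [unfold lam, eta; lra | apply pos_INR]. }
  assert (Hmass : INR m * mu (visits_often U lam N) <= INR M * mu U).
  { rewrite <- (sumR_const (mu U) M), (sumR_ext _ (fun i => mu (fun y => U (iter i T y))))
      by (intros; symmetry; apply mu_iter_inv; auto).
    apply (count_inequality _ _ mu Hp); [|apply visits_often_borel; auto|].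
    - intros i; apply borel_preimage_iter; auto.
    - intros x Hx. apply Hx; [unfold M; lia | auto]. }
  pose proof (counting_gap (mu U) _ (INR M) (INR m) (conj Hc0 HU1) (pos_INR m) ltac:(unfold lam, eta in *; lra)
                HN Hmass (pos_INR M)).
  unfold eta in HMeta. lra.
Qed.

End Minimality.

(** ** Ultrafilter limits of bounded sequences *)

(** A nonprincipal ultrafilter on [nat], given by its family of large sets. *)
Record is_ultra (Uf : (nat -> Prop) -> Prop) : Prop := {
  uf_True : Uf (fun _ => True);
  uf_not_False : ~ Uf (fun _ => False);
  uf_inter : forall A B, Uf A -> Uf B -> Uf (fun n => A n /\ B n);
  uf_mono : forall A B : nat -> Prop, (forall n, A n -> B n) -> Uf A -> Uf B;
  uf_split : forall A, Uf A \/ Uf (fun n => ~ A n);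
  uf_tail : forall m, Uf (fun n => (m <= n)%nat)
}.

(** An ultrafilter refining the Fréchet filter (MathComp's ultrafilter lemma). *)
Lemma nat_ultra : exists Uf, is_ultra Uf.
Proof.
  destruct (@filter.ultraFilterLemma nat filter.eventually _) as [G [HG HsG]].
  exists G.
  assert (PF : filter.ProperFilter G) by (apply filter.ultra_proper).
  assert (F : filter.Filter G) by (apply filter.filter_filter).
  split.
  - exact (@filter.filterT _ G F).
  - intro H. exact (@filter.filter_not_empty _ G PF H).
  - intros A B HA HB. exact (@filter.filterI _ G F A B HA HB).
  - intros A B HAB HA. exact (@filter.filterS _ G F A B HAB HA).
  - intro A. exact (filter.in_ultra_setVsetC A HG).
  - intro m. apply HsG. exists m; [exact I|]. intros n Hn. exact (ssrbool.elimT ssrnat.leP Hn).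
Qed.

Section UltraLimit.
Variable Uf : (nat -> Prop) -> Prop.
Hypothesis HU : is_ultra Uf.

Lemma uf_nonempty A : Uf A -> exists n, A n.
Proof.
  intros H. apply NNPP. intro Hn. apply (uf_not_False _ HU).
  apply (uf_mono _ HU A); auto. intros n An; apply Hn; eauto.
Qed.

Definition is_ulim (s : nat -> R) (L : R) : Prop :=
  forall e, 0 < e -> Uf (fun k => Rabs (s k - L) < e).

Lemma ulim_unique s L1 L2 : is_ulim s L1 -> is_ulim s L2 -> L1 = L2.
Proof.
  intros H1 H2. apply NNPP. intro Hne. set (e := Rabs (L1 - L2) / 2).
  assert (He : 0 < e).
  { unfold e. assert (L1 - L2 <> 0) by (intro; apply Hne; lra).
    pose proof (Rabs_pos_lt _ H). lra. }
  destruct (uf_nonempty _ (uf_inter _ HU _ _ (H1 e He) (H2 e He))) as [k [Hk1 Hk2]].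
  assert (Rabs (L1 - L2) <= Rabs (s k - L1) + Rabs (s k - L2)).
  { replace (L1 - L2) with (- (s k - L1) + (s k - L2)) by ring.
    eapply Rle_trans; [apply Rabs_triang|]. rewrite Rabs_Ropp. lra. }
  unfold e in *. lra.
Qed.

(** Every sequence in [[0,1]] has an ultrafilter limit: the supremum of the
    [t] such that [t <= s k] for ultrafilter-many [k]. *)
Lemma ulim_exists s : (forall k, 0 <= s k <= 1) -> exists L, is_ulim s L.
Proof.
  intros Hs. set (E := fun t => t <= 1 /\ Uf (fun k => t <= s k)).
  assert (Hb : bound E) by (exists 1; intros t [Ht _]; auto).
  assert (He0 : E 0).
  { split; [lra|]. apply (uf_mono _ HU (fun _ => True)); [intros k _; apply Hs | apply HU]. }
  exists (supR E). intros e He.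
  destruct (supR_approx E e Hb (ex_intro _ 0 He0) He) as [t [[Ht1 Ht2] Ht3]].
  assert (Hup : Uf (fun k => s k < supR E + e)).
  { destruct (uf_split _ HU (fun k => s k < supR E + e)) as [H|H]; auto. exfalso.
    destruct (Rle_lt_dec (supR E + e) 1).
    - assert (supR E + e <= supR E); [|lra]. apply supR_ub; auto. split; auto.
      apply (uf_mono _ HU _ _ (fun n Hn => Rnot_lt_le _ _ Hn) H).
    - destruct (uf_nonempty _ H) as [k Hk]. specialize (Hs k). lra. }
  apply (uf_mono _ HU (fun k => t <= s k /\ s k < supR E + e)).
  - intros k [H1 H2]. apply Rabs_def1; lra.
  - apply (uf_inter _ HU); auto.
Qed.

Lemma ulim_plus s t Ls Lt :
  is_ulim s Ls -> is_ulim t Lt -> is_ulim (fun k => s k + t k) (Ls + Lt).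
Proof.
  intros H1 H2 e He.
  apply (uf_mono _ HU (fun k => Rabs (s k - Ls) < e / 2 /\ Rabs (t k - Lt) < e / 2)).
  - intros k [A B]. replace (s k + t k - (Ls + Lt)) with ((s k - Ls) + (t k - Lt)) by ring.
    eapply Rle_lt_trans; [apply Rabs_triang | lra].
  - apply (uf_inter _ HU); [apply H1 | apply H2]; lra.
Qed.

Lemma ulim_ext s t L : (forall k, s k = t k) -> is_ulim s L -> is_ulim t L.
Proof.
  intros H H1 e He. apply (uf_mono _ HU (fun k => Rabs (s k - L) < e)); [|apply H1; auto].
  intros k. rewrite H. auto.
Qed.

Lemma ulim_const c : is_ulim (fun _ => c) c.
Proof.
  intros e He. apply (uf_mono _ HU (fun _ => True)); [|apply HU].
  intros; rewrite Rminus_diag, Rabs_R0; auto.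
Qed.

Lemma ulim_le s t Ls Lt : is_ulim s Ls -> is_ulim t Lt -> (forall k, s k <= t k) -> Ls <= Lt.
Proof.
  intros H1 H2 H. apply Rnot_lt_le. intro Hlt. set (e := (Ls - Lt) / 2).
  destruct (uf_nonempty _ (uf_inter _ HU _ _ (H1 e ltac:(unfold e; lra))
                                              (H2 e ltac:(unfold e; lra)))) as [k [A B]].
  apply Rabs_def2 in A. apply Rabs_def2 in B. specialize (H k). unfold e in *. lra.
Qed.

(** Sequences tending to [0] have ultrafilter limit [0] (the ultrafilter
    contains all tails). *)
Lemma ulim_vanish s : (forall k, Rabs (s k) <= / (INR k + 1)) -> is_ulim s 0.
Proof.
  intros H e He. destruct (exists_nat_inv e He) as [m Hm].
  apply (uf_mono _ HU (fun n => (m <= n)%nat)); [|apply HU]. intros n Hn.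
  rewrite Rminus_0_r. eapply Rle_lt_trans; [apply H|]. eapply Rle_lt_trans; [|apply Hm].
  apply Rinv_le_contravar; [pose proof (pos_INR m); lra|]. apply le_INR in Hn; lra.
Qed.

Definition ulim (s : nat -> R) : R :=
  match excluded_middle_informative (exists L, is_ulim s L) with
  | left h => proj1_sig (constructive_indefinite_description _ h)
  | right _ => 0
  end.

Lemma ulim_spec01 s : (forall k, 0 <= s k <= 1) -> is_ulim s (ulim s).
Proof.
  intros H. unfold ulim. destruct excluded_middle_informative as [h|h].
  - destruct (constructive_indefinite_description _ h); auto.
  - exfalso. apply h, ulim_exists, H.
Qed.

End UltraLimit.

(** ** Uniform covers of closed sets in a compact space *)

Section UniformCover.
Variable X : Type.
Variable d : X -> X -> R.
Hypothesis Hm : is_metric X d.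
Hypothesis Hcpt : is_compact X d.

Lemma closed_deep_part K (V : X -> Prop) r : is_closed X d K ->
  is_closed X d (fun y => K y /\ forall z, d y z < r -> V z).
Proof.
  intros HK y Hy. apply not_and_or in Hy as [Hy|Hy].
  - destruct (HK y Hy) as [e [He He']]. exists e; split; auto.
    intros y' Hy' [H1 _]. exact (He' y' Hy' H1).
  - apply not_all_ex_not in Hy as [z Hz]. apply imply_to_and in Hz as [Hz1 Hz2].
    exists (r - d y z). split; [lra|]. intros y' Hy' [_ H]. apply Hz2, H.
    pose proof (d_tri _ _ Hm y' y z). rewrite (d_sym _ _ Hm y' y) in H0. lra.
Qed.

Lemma bound_index_list (l : list (option (nat * nat))) :
  exists N M, forall n m, In (Some (n, m)) l -> (n < N)%nat /\ (m <= M)%nat.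
Proof.
  induction l as [|[[n0 m0]|] l [N [M IH]]]; [exists O, O; intros n m []| |].
  - exists (Nat.max N (S n0)), (Nat.max M m0). intros n m [H|H].
    + inversion H; subst; lia.
    + destruct (IH n m H); lia.
  - exists N, M. intros n m [H|H]; [discriminate | auto].
Qed.

Lemma uniform_cover K (V : nat -> X -> Prop) : is_closed X d K ->
  (forall n, is_open X d (V n)) -> (forall x, K x -> exists n, V n x) ->
  exists N M, forall y, K y ->
    exists n, (n < N)%nat /\ forall z, d y z < / (INR M + 1) -> V n z.
Proof.
  intros HK HV Hcov.
  set (G := fun (i : option (nat * nat)) => match i with
    | None => fun y => ~ K y
    | Some (n, m) => fun y => exists w, d y w < / (INR m + 1) /\
                        forall z, d w z < 2 * / (INR m + 1) -> V n z end).
  assert (HGo : forall i, is_open X d (G i)).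
  { intros [[n m]|]; simpl; [|apply HK].
    intros y [w [Hw Hw']]. exists (/ (INR m + 1) - d y w). split; [lra|].
    intros y' Hy'. exists w. split; auto.
    pose proof (d_tri _ _ Hm y' y w). rewrite (d_sym _ _ Hm y' y) in H. lra. }
  destruct (Hcpt _ G HGo) as [l Hl].
  { intros y. destruct (classic (K y)) as [Ky|nKy]; [|exists None; auto].
    destruct (Hcov y Ky) as [n Hn]. destruct (HV n y Hn) as [e [He He']].
    destruct (exists_nat_inv (e / 2)) as [m Hmm]; [lra|].
    exists (Some (n, m)). simpl. exists y. split.
    - rewrite (d_refl _ _ Hm). apply inv_succ_pos.
    - intros z Hz. apply He'. lra. }
  destruct (bound_index_list l) as [N [M HNM]]. exists N, M.
  intros y Ky. destruct (Hl y) as [[[n m]|] [Hin Hi]]; simpl in Hi; [|contradiction].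
  destruct Hi as [w [Hw Hw']]. destruct (HNM n m Hin) as [HnN HmM].
  exists n. split; auto. intros z Hz. apply Hw'.
  assert (/ (INR M + 1) <= / (INR m + 1)).
  { apply Rinv_le_contravar; [pose proof (pos_INR m); lra|]. apply le_INR in HmM. lra. }
  pose proof (d_tri _ _ Hm w y z). rewrite (d_sym _ _ Hm w y) in H0. lra.
Qed.

End UniformCover.

(** ** From an invariant content to an invariant Borel probability *)

Record is_invariant_content {X : Type} (T : X -> X) (nu : (X -> Prop) -> R) : Prop := {
  content_nonneg : forall A, 0 <= nu A;
  content_add : forall A B, (forall x, A x -> B x -> False) ->
                  nu (fun x => A x \/ B x) = nu A + nu B;
  content_mono : forall A B : X -> Prop, (forall x, A x -> B x) -> nu A <= nu B;
  content_full : nu (fun _ => True) = 1;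
  content_inv : forall A, nu (fun x => A (T x)) = nu A
}.

Section ContentToMeasure.
Variable X : Type.
Variable d : X -> X -> R.
Hypothesis Hm : is_metric X d.
Hypothesis Hcpt : is_compact X d.
Variable T : X -> X.
Hypothesis Hcont : is_continuous X d T.
Variable nu : (X -> Prop) -> R.
Hypothesis Hnu : is_invariant_content T nu.

Lemma nu_le1 A : nu A <= 1.
Proof. rewrite <- (content_full _ _ Hnu). apply (content_mono _ _ Hnu). auto. Qed.

Lemma nu_empty : nu (fun _ => False) = 0.
Proof.
  pose proof (content_add _ _ Hnu (fun _ => False) (fun _ => False) (fun _ H _ => H)).
  assert (nu (fun x => False \/ False) <= nu (fun _ => False))
    by (apply (content_mono _ _ Hnu); tauto).
  pose proof (content_nonneg _ _ Hnu (fun _ => False)). lra.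
Qed.

Lemma nu_subadd A B : nu (fun x => A x \/ B x) <= nu A + nu B.
Proof.
  apply Rle_trans with (nu (fun x => A x \/ (B x /\ ~ A x))).
  - apply (content_mono _ _ Hnu). intros x [H|H]; auto. destruct (classic (A x)); auto.
  - rewrite (content_add _ _ Hnu) by (intros x H [_ H']; auto).
    assert (nu (fun x => B x /\ ~ A x) <= nu B) by (apply (content_mono _ _ Hnu); tauto). lra.
Qed.

Lemma nu_finite_subadd (C : nat -> X -> Prop) n :
  nu (fun x => exists j, (j < n)%nat /\ C j x) <= sumR (fun j => nu (C j)) n.
Proof.
  induction n as [|n IH]; simpl.
  - rewrite <- nu_empty. apply (content_mono _ _ Hnu). intros x [j [Hj _]]; lia.
  - eapply Rle_trans; [|apply Rplus_le_compat_r, IH].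
    eapply Rle_trans; [|apply nu_subadd]. apply (content_mono _ _ Hnu). intros x [j [Hj H]].
    destruct (Nat.eq_dec j n) as [->|]; auto. left; exists j; split; auto; lia.
Qed.

Definition inner_set (V : X -> Prop) (t : R) : Prop :=
  exists K, is_closed X d K /\ (forall x, K x -> V x) /\ t = nu K.

Definition inner (V : X -> Prop) : R := supR (inner_set V).

Lemma inner_set_bound V : bound (inner_set V).
Proof. exists 1. intros t [K [_ [_ ->]]]. apply nu_le1. Qed.

Lemma inner_set_ne V : exists t, inner_set V t.
Proof. exists (nu (fun _ => False)), (fun _ => False). split; [apply closed_False | split; tauto]. Qed.

Lemma inner_ub V K : is_closed X d K -> (forall x, K x -> V x) -> nu K <= inner V.
Proof. intros HK HKV. apply supR_ub; [apply inner_set_bound | exists K; auto]. Qed.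

Lemma inner_le V : inner V <= nu V.
Proof.
  apply supR_least; [apply inner_set_ne|]. intros t [K [_ [HK ->]]].
  apply (content_mono _ _ Hnu); auto.
Qed.

Lemma inner_ge0 V : 0 <= inner V.
Proof. rewrite <- nu_empty. apply inner_ub; [apply closed_False | tauto]. Qed.

Lemma inner_approx V e : 0 < e ->
  exists K, is_closed X d K /\ (forall x, K x -> V x) /\ inner V - e < nu K.
Proof.
  intros He.
  destruct (supR_approx _ e (inner_set_bound V) (inner_set_ne V) He) as [t [[K [H1 [H2 ->]]] H3]].
  exists K; auto.
Qed.

Lemma inner_mono V W : (forall x, V x -> W x) -> inner V <= inner W.
Proof.
  intros H. apply supR_least; [apply inner_set_ne|]. intros t [K [HK [HKV ->]]].
  apply inner_ub; auto.
Qed.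

(** Countable subadditivity of [inner] on open sets, in finite form: a
    closed set covered by open sets [V n] is covered, with a margin, by
    finitely many of them, and the closed "deep parts" of these [V n] bound
    [nu K]. *)
Lemma inner_cover K (V : nat -> X -> Prop) : is_closed X d K ->
  (forall n, is_open X d (V n)) -> (forall x, K x -> exists n, V n x) ->
  exists N, nu K <= sumR (fun n => inner (V n)) N.
Proof.
  intros HK HV Hcov.
  destruct (uniform_cover X d Hm Hcpt K V HK HV Hcov) as [N [M HNM]]. exists N.
  set (deep := fun n y => K y /\ forall z, d y z < / (INR M + 1) -> V n z).
  apply Rle_trans with (nu (fun y => exists n, (n < N)%nat /\ deep n y)).
  - apply (content_mono _ _ Hnu). intros y Ky.
    destruct (HNM y Ky) as [n [Hn Hball]]. exists n. split; [|split]; auto.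
  - eapply Rle_trans; [apply nu_finite_subadd|]. apply sumR_le. intros n _.
    apply inner_ub; [apply closed_deep_part; auto|].
    intros y [_ Hy]. apply Hy. rewrite (d_refl _ _ Hm). apply inv_succ_pos.
Qed.

(** [outer A] is the infimum of [inner V] over open [V ⊇ A]; it is an outer
    measure agreeing with [inner] on open sets. *)
Definition outer_set (A : X -> Prop) (t : R) : Prop :=
  exists V, is_open X d V /\ (forall x, A x -> V x) /\ t = inner V.

Definition outer (A : X -> Prop) : R := infR (outer_set A).

Lemma outer_set_lb A : exists b, forall y, outer_set A y -> b <= y.
Proof. exists 0. intros y [V [_ [_ ->]]]. apply inner_ge0. Qed.

Lemma outer_set_ne A : exists t, outer_set A t.
Proof. exists (inner (fun _ => True)), (fun _ => True). split; [apply open_True | split; auto]. Qed.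

Lemma outer_le A V : is_open X d V -> (forall x, A x -> V x) -> outer A <= inner V.
Proof. intros HV HAV. apply infR_lb; [apply outer_set_lb | exists V; auto]. Qed.

Lemma outer_approx A e : 0 < e ->
  exists V, is_open X d V /\ (forall x, A x -> V x) /\ inner V < outer A + e.
Proof.
  intros He.
  destruct (infR_approx _ e (outer_set_lb A) (outer_set_ne A) He) as [t [[V [H1 [H2 ->]]] H3]].
  exists V; auto.
Qed.

Lemma outer_ge0 A : 0 <= outer A.
Proof. apply infR_greatest; [apply outer_set_ne|]. intros t [V [_ [_ ->]]]. apply inner_ge0. Qed.

Lemma outer_mono A B : (forall x, A x -> B x) -> outer A <= outer B.
Proof.
  intros H. apply infR_greatest; [apply outer_set_ne|]. intros t [V [HV [HBV ->]]].
  apply outer_le; auto.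
Qed.

Lemma outer_ext A B : (forall x, A x <-> B x) -> outer A = outer B.
Proof. intros H. apply Rle_antisym; apply outer_mono; intros x; apply H. Qed.

Lemma outer_open V : is_open X d V -> outer V = inner V.
Proof.
  intros HV. apply Rle_antisym; [apply outer_le; auto|].
  apply infR_greatest; [apply outer_set_ne|]. intros t [W [HW [HVW ->]]]. apply inner_mono; auto.
Qed.

Lemma outer_True : outer (fun _ => True) = 1.
Proof.
  rewrite outer_open by apply open_True. apply Rle_antisym.
  - eapply Rle_trans; [apply inner_le | apply nu_le1].
  - rewrite <- (content_full _ _ Hnu). apply inner_ub; [apply closed_True | auto].
Qed.

Lemma outer_empty : outer (fun _ => False) = 0.
Proof.
  apply Rle_antisym; [|apply outer_ge0]. rewrite outer_open by apply open_False.
  eapply Rle_trans; [apply inner_le | rewrite nu_empty; lra].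
Qed.

(** Countable subadditivity of [outer], up to [e]: enlarge each [A n] to an
    open [V n] with error [e/2^(n+2)], and approximate the union of the
    [V n] from inside by a closed set, to which [inner_cover] applies. *)
Lemma outer_subadd_eps (A : nat -> X -> Prop) e : 0 < e ->
  exists N, outer (fun x => exists n, A n x) <= sumR (fun n => outer (A n)) N + e.
Proof.
  intros He.
  assert (H : forall n, exists V, is_open X d V /\ (forall x, A n x -> V x) /\
                 inner V < outer (A n) + (e / 2) / 2 ^ (S n)).
  { intros n. apply outer_approx. apply Rdiv_lt_0_compat; [lra | apply pow_lt; lra]. }
  destruct (choice _ H) as [V HV].
  destruct (inner_approx (fun x => exists n, V n x) (e / 2)) as [K [HK [HKW HKr]]]; [lra|].
  destruct (inner_cover K V HK) as [N HN]; [intros n; apply HV | auto|].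
  exists N.
  assert (outer (fun x => exists n, A n x) <= inner (fun x => exists n, V n x)).
  { apply outer_le; [apply open_cunion; intros n; apply HV|].
    intros x [n Hn]. exists n; apply HV; auto. }
  assert (sumR (fun n => inner (V n)) N <= sumR (fun n => outer (A n) + (e / 2) / 2 ^ (S n)) N).
  { apply sumR_le. intros n _. left; apply HV. }
  rewrite sumR_plus in H1. pose proof (sumR_geom (e / 2) N). lra.
Qed.

Lemma outer_subadd A B : outer (fun x => A x \/ B x) <= outer A + outer B.
Proof.
  apply Rle_epsilon. intros e He.
  set (Sq := fun n : nat => match n with O => A | 1%nat => B | _ => fun _ => False end).
  destruct (outer_subadd_eps Sq e He) as [N HN].
  rewrite (outer_ext _ (fun x => exists n, Sq n x)).
  - eapply Rle_trans; [apply HN | apply Rplus_le_compat_r].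
    clear HN. pose proof (outer_ge0 A); pose proof (outer_ge0 B).
    induction N as [|N IH]; simpl; [lra|].
    destruct N as [|[|N]]; simpl in *; [lra | lra | rewrite outer_empty; lra].
  - intros x; split; [intros [H|H]; [exists O | exists 1%nat]; auto|].
    intros [[|[|n]] H]; simpl in H; tauto.
Qed.

(** [carath E]: [E] splits every set additively for [outer]
    (Carathéodory measurability; the reverse inequality is subadditivity). *)
Definition carath (E : X -> Prop) : Prop :=
  forall A, outer (fun x => A x /\ E x) + outer (fun x => A x /\ ~ E x) <= outer A.

Lemma carath_ext E F : carath E -> (forall x, E x <-> F x) -> carath F.
Proof.
  intros H Hx A.
  rewrite (outer_ext _ (fun x => A x /\ E x)),
          (outer_ext (fun x => A x /\ ~ F x) (fun x => A x /\ ~ E x)); [apply H| |];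
    intros x; rewrite (Hx x); tauto.
Qed.

Lemma carath_compl E : carath E -> carath (fun x => ~ E x).
Proof.
  intros H A. rewrite (outer_ext (fun x => A x /\ ~ ~ E x) (fun x => A x /\ E x)).
  - specialize (H A). lra.
  - intros x; split; [intros [H1 H2]; split; auto; apply NNPP; auto | tauto].
Qed.

Lemma carath_eq E A : carath E ->
  outer A = outer (fun x => A x /\ E x) + outer (fun x => A x /\ ~ E x).
Proof.
  intros H. apply Rle_antisym; [|apply H]. eapply Rle_trans; [|apply outer_subadd].
  apply outer_mono. intros x Ax. destruct (classic (E x)); auto.
Qed.

(** Given an open [V ⊇ A] almost optimal for
    [A], pick closed [K ⊆ V \ F] almost filling [V \ F] and closed
    [K' ⊆ V \ K] almost filling [V \ K ⊇ A ∩ F]; the disjoint closed set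
    [K ∪ K'] lies in [V], so additivity of [nu] gives the inequality. *)
Lemma carath_closed F : is_closed X d F -> carath F.
Proof.
  intros HF A. apply Rle_epsilon. intros e He.
  destruct (outer_approx A (e / 3)) as [V [HV [HAV HVr]]]; [lra|].
  assert (HW1 : is_open X d (fun x => V x /\ ~ F x)) by (apply open_inter; auto).
  destruct (inner_approx (fun x => V x /\ ~ F x) (e / 3)) as [K [HK [HKW HKr]]]; [lra|].
  assert (HW2 : is_open X d (fun x => V x /\ ~ K x)) by (apply open_inter; auto).
  destruct (inner_approx (fun x => V x /\ ~ K x) (e / 3)) as [K' [HK' [HKW' HKr']]]; [lra|].
  assert (H1 : outer (fun x => A x /\ ~ F x) <= inner (fun x => V x /\ ~ F x)).
  { apply outer_le; auto. intros x [Ax nF]; split; auto. }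
  assert (H2 : outer (fun x => A x /\ F x) <= inner (fun x => V x /\ ~ K x)).
  { apply outer_le; auto. intros x [Ax Fx]; split; auto. intros Kx. destruct (HKW x Kx); auto. }
  assert (H3 : nu K + nu K' <= inner V).
  { rewrite <- (content_add _ _ Hnu).
    - apply inner_ub; [apply closed_union; auto|].
      intros x [Kx|Kx]; [apply HKW | apply HKW']; auto.
    - intros x Kx Kx'. destruct (HKW' x Kx'); auto. }
  lra.
Qed.

Lemma carath_or E F : carath E -> carath F -> carath (fun x => E x \/ F x).
Proof.
  intros HE HF A. pose proof (HE A). pose proof (HF (fun x => A x /\ ~ E x)). cbv beta in H0.
  assert (outer (fun x => A x /\ (E x \/ F x)) <=
          outer (fun x => A x /\ E x) + outer (fun x => (A x /\ ~ E x) /\ F x)).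
  { eapply Rle_trans; [|apply outer_subadd]. apply outer_mono. intros x [Ax [Ex|Fx]]; auto.
    destruct (classic (E x)); auto. }
  rewrite (outer_ext (fun x => A x /\ ~ (E x \/ F x)) (fun x => (A x /\ ~ E x) /\ ~ F x)).
  - lra.
  - intros x; tauto.
Qed.

Lemma carath_funion (E : nat -> X -> Prop) n : (forall n, carath (E n)) ->
  carath (fun x => exists j, (j < n)%nat /\ E j x).
Proof.
  intros H. induction n as [|n IH].
  - apply (carath_ext _ _ (carath_closed _ (closed_False _ _))).
    intros x; split; [tauto | intros [j [Hj _]]; lia].
  - apply (carath_ext _ _ (carath_or _ _ IH (H n))). intros x; split.
    + intros [[j [Hj H1]]|H1]; [exists j; split; auto; lia | exists n; auto].
    + intros [j [Hj H1]]. destruct (Nat.eq_dec j n) as [->|]; auto.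
      left; exists j; split; auto; lia.
Qed.

Lemma carath_finter (E : nat -> X -> Prop) n : (forall n, carath (E n)) ->
  carath (fun x => forall j, (j < n)%nat -> E j x).
Proof.
  intros H.
  apply (carath_ext _ _ (carath_compl _ (carath_funion (fun j x => ~ E j x) n
                                           (fun j => carath_compl _ (H j))))).
  intros x; split; [intros H1 j Hj; apply NNPP; intro; apply H1; eauto|].
  intros H1 [j [Hj H2]]; auto.
Qed.

Lemma carath_fadd (D : nat -> X -> Prop) A n : (forall n, carath (D n)) ->
  (forall n m x, n <> m -> D n x -> D m x -> False) ->
  outer (fun x => A x /\ exists j, (j < n)%nat /\ D j x) =
  sumR (fun j => outer (fun x => A x /\ D j x)) n.
Proof.
  intros HM Hdis. induction n as [|n IH]; simpl.
  - rewrite <- outer_empty. apply outer_ext. intros x; split; [intros [_ [j [Hj _]]]; lia | tauto].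
  - rewrite <- IH, (carath_eq (D n)), Rplus_comm by auto. f_equal; apply outer_ext; intros x; split.
    + intros [[Ax [j [Hj Dj]]] nD]. split; auto. exists j; split; auto.
      destruct (Nat.eq_dec j n) as [->|]; [contradiction | lia].
    + intros [Ax [j [Hj Dj]]]. split; [split; auto; exists j; split; auto|].
      intros Dn. apply (Hdis j n x); auto. lia.
    + intros [[Ax _] Dn]; auto.
    + intros [Ax Dn]. split; auto. split; auto. exists n; auto.
Qed.

(** Countable unions of measurable sets are measurable: disjointify, then
    use finite additivity and countable subadditivity up to [e]. *)
Lemma carath_cunion (E : nat -> X -> Prop) : (forall n, carath (E n)) ->
  carath (fun x => exists n, E n x).
Proof.
  intros HE. set (D := fun n x => E n x /\ forall j, (j < n)%nat -> ~ E j x).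
  assert (HD : forall n, carath (D n)).
  { intros n. apply (carath_ext _ _ (carath_compl _ (carath_or _ _ (carath_compl _ (HE n))
                      (carath_compl _ (carath_finter _ n (fun j => carath_compl _ (HE j))))))).
    unfold D. intros x; split; [intros H; apply NNPP; intro; apply H; tauto | tauto]. }
  assert (Hdis : forall n m x, n <> m -> D n x -> D m x -> False).
  { intros n m x Hnm [H1 H2] [H3 H4].
    destruct (Nat.lt_gt_cases n m) as [[H|H] _]; auto; [apply (H4 n) | apply (H2 m)]; auto. }
  apply (carath_ext (fun x => exists n, D n x)).
  2: { intros x; split; [intros [n [Hn _]]; eauto|]. intros [n Hn].
       destruct (least_index (fun n => E n x) n Hn) as [m [Em Hbefore]]. exists m; split; auto. }
  intros A. apply Rle_epsilon. intros e He.
  destruct (outer_subadd_eps (fun n x => A x /\ D n x) e He) as [N HN].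
  rewrite (outer_ext (fun x => A x /\ exists n, D n x) (fun x => exists n, A x /\ D n x)).
  2: { intros x; split; [intros [Ax [n Dn]] | intros [n [Ax Dn]]]; eauto. }
  pose proof (carath_eq (fun x => exists j, (j < N)%nat /\ D j x) A (carath_funion D N HD)) as H.
  cbv beta in H. rewrite carath_fadd in H; auto.
  assert (outer (fun x => A x /\ ~ (exists n, D n x)) <=
          outer (fun x => A x /\ ~ (exists j, (j < N)%nat /\ D j x))).
  { apply outer_mono. intros x [Ax H1]. split; auto. intros [j [_ Hj]]; eauto. }
  lra.
Qed.

Lemma carath_borel E : borel X d E -> carath E.
Proof.
  intros HE. induction HE as [U HU|A' HA IH|F HF IH|A' B' HA IH Hx].
  - apply (carath_ext (fun x => ~ ~ U x)).
    + apply carath_compl, carath_closed, closed_compl_open; auto.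
    + intros x; split; [apply NNPP | tauto].
  - apply carath_compl; auto.
  - apply carath_cunion; auto.
  - apply (carath_ext _ _ IH); auto.
Qed.

Lemma outer_sigma (A : nat -> X -> Prop) : (forall n, borel X d (A n)) ->
  (forall n m x, n <> m -> A n x -> A m x -> False) ->
  infinite_sum (fun n => outer (A n)) (outer (fun x => exists n, A n x)).
Proof.
  intros HB Hdis.
  assert (Hfadd : forall n, outer (fun x => exists j, (j < n)%nat /\ A j x) =
                            sumR (fun j => outer (A j)) n).
  { intros n. rewrite (outer_ext _ (fun x => True /\ exists j, (j < n)%nat /\ A j x)) by tauto.
    rewrite carath_fadd; auto.
    - apply sumR_ext. intros; apply outer_ext; tauto.
    - intros; apply carath_borel; auto. }
  intros e He. destruct (outer_subadd_eps A (e / 2)) as [N HN]; [lra|].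
  exists N. intros n Hn. rewrite <- sumR_f_R0, <- Hfadd.
  assert (outer (fun x => exists j, (j < S n)%nat /\ A j x) <= outer (fun x => exists n, A n x)).
  { apply outer_mono. intros x [j [_ Hj]]; eauto. }
  assert (sumR (fun n => outer (A n)) N <= sumR (fun n => outer (A n)) (S n)).
  { apply sumR_mono; [intros; apply outer_ge0 | lia]. }
  rewrite <- (Hfadd (S n)) in H0. unfold R_dist. apply Rabs_def1; lra.
Qed.

(** Invariance: [T]-preimages do not increase [inner] (the image of a
    closed set is closed) nor [outer]; applied to a Borel set and to its
    complement this gives equality. *)
Lemma inner_preimage V : inner (fun x => V (T x)) <= inner V.
Proof.
  apply supR_least; [apply inner_set_ne|]. intros t [K [HK [HKV ->]]].
  apply Rle_trans with (nu (fun y => exists z, K z /\ y = T z)).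
  - rewrite <- (content_inv _ _ Hnu (fun y => exists z, K z /\ y = T z)).
    apply (content_mono _ _ Hnu). intros x Kx; eauto.
  - apply inner_ub; [apply (image_closed X d Hm T Hcont Hcpt); auto|].
    intros y [z [Kz ->]]. apply HKV; auto.
Qed.

Lemma outer_preimage A : outer (fun x => A (T x)) <= outer A.
Proof.
  apply infR_greatest; [apply outer_set_ne|]. intros t [V [HV [HAV ->]]].
  eapply Rle_trans; [apply (outer_le _ (fun x => V (T x))) | apply inner_preimage].
  - apply open_preimage; auto.
  - intros x; apply HAV.
Qed.

Lemma outer_compl_sum E : borel X d E -> outer E + outer (fun x => ~ E x) = 1.
Proof.
  intros HE. rewrite <- outer_True, (carath_eq E (fun _ => True)) by (apply carath_borel; auto).
  f_equal; apply outer_ext; tauto.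
Qed.

Lemma outer_inv A : borel X d A -> outer (fun x => A (T x)) = outer A.
Proof.
  intros HA. pose proof (outer_compl_sum _ HA).
  pose proof (outer_compl_sum _ (borel_preimage _ _ _ Hcont _ HA)).
  pose proof (outer_preimage A). pose proof (outer_preimage (fun x => ~ A x)). cbv beta in *. lra.
Qed.

Theorem outer_invariant : is_T_invariant X d T outer.
Proof.
  split; [split; [|split; [|split]]|].
  - intros A B _ H. apply outer_ext; auto.
  - intros; apply outer_ge0.
  - apply outer_True.
  - apply outer_sigma.
  - apply outer_inv.
Qed.

Lemma outer_le_content U C : is_open X d U -> (forall x, C x -> U x) -> outer C <= nu U.
Proof. intros HU HC. eapply Rle_trans; [apply (outer_le C U); auto | apply inner_le]. Qed.

End ContentToMeasure.

(** ** Empirical contents along orbit windows *)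

Definition dec (P : Prop) : bool := if excluded_middle_informative P then true else false.

Lemma dec_true (P : Prop) : dec P = true <-> P.
Proof. unfold dec; destruct excluded_middle_informative; split; auto; intros; try discriminate; tauto. Qed.

Lemma indicator_or (P Q : Prop) : ~ (P /\ Q) ->
  ((if dec (P \/ Q) then 1 else 0) = (if dec P then 1 else 0) + (if dec Q then 1 else 0))%nat.
Proof.
  intros H. unfold dec.
  destruct (excluded_middle_informative (P \/ Q)), (excluded_middle_informative P),
           (excluded_middle_informative Q); tauto.
Qed.

Section Visits.
Variable X : Type.
Variable T : X -> X.
Variable x0 : X.

Definition visits (A : X -> Prop) (a len : nat) : nat :=
  length (filter (fun n => dec (A (iter n T x0))) (seq a len)).

Lemma visits_cons A a len :
  visits A a (S len) = ((if dec (A (iter a T x0)) then 1 else 0) + visits A (S a) len)%nat.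
Proof. unfold visits. simpl. destruct dec; reflexivity. Qed.

Lemma visits_snoc A a len :
  visits A a (S len) = (visits A a len + (if dec (A (iter (a + len) T x0)) then 1 else 0))%nat.
Proof. unfold visits. rewrite seq_S, filter_app, length_app. simpl. destruct dec; reflexivity. Qed.

Lemma visits_le A a len : (visits A a len <= len)%nat.
Proof.
  revert a; induction len as [|len IH]; intros a; [unfold visits; simpl; lia|].
  rewrite visits_cons. specialize (IH (S a)). destruct dec; lia.
Qed.

Lemma visits_add A B a len : (forall x, A x -> B x -> False) ->
  visits (fun x => A x \/ B x) a len = (visits A a len + visits B a len)%nat.
Proof.
  intros H. revert a; induction len as [|len IH]; intros a; [reflexivity|].
  rewrite !visits_cons, IH, indicator_or; [lia|]. intros [H1 H2]; eauto.
Qed.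

Lemma visits_mono A B a len : (forall x, A x -> B x) -> (visits A a len <= visits B a len)%nat.
Proof.
  intros H. revert a; induction len as [|len IH]; intros a; [unfold visits; simpl; lia|].
  rewrite !visits_cons. specialize (IH (S a)).
  destruct (dec (A (iter a T x0))) eqn:EA; destruct (dec (B (iter a T x0))) eqn:EB; try lia.
  apply dec_true, H, dec_true in EA. congruence.
Qed.

Lemma visits_True a len : visits (fun _ => True) a len = len.
Proof.
  revert a; induction len as [|len IH]; intros a; [reflexivity|].
  rewrite visits_cons, IH. assert (dec True = true) by (apply dec_true; auto).
  rewrite H. lia.
Qed.

Lemma visits_preimage A a len : visits (fun x => A (T x)) a len = visits A (S a) len.
Proof.
  revert a; induction len as [|len IH]; intros a; [reflexivity|].
  rewrite !visits_cons, IH. reflexivity.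
Qed.

Lemma visits_shift A a len : Rabs (INR (visits A (S a) len) - INR (visits A a len)) <= 1.
Proof.
  pose proof (visits_cons A a len) as H1. pose proof (visits_snoc A a len) as H2.
  assert (E : visits A (S a) len = visits A a len \/ visits A (S a) len = S (visits A a len) \/
              S (visits A (S a) len) = visits A a len).
  { destruct (dec (A (iter a T x0))), (dec (A (iter (a + len) T x0))); lia. }
  destruct E as [E|[E|E]].
  - rewrite E, Rminus_diag, Rabs_R0. lra.
  - rewrite E, S_INR. replace (INR (visits A a len) + 1 - INR (visits A a len)) with 1 by ring.
    rewrite Rabs_R1; lra.
  - rewrite <- E, S_INR.
    replace (INR (visits A (S a) len) - (INR (visits A (S a) len) + 1)) with (-1) by ring.
    rewrite Rabs_left; lra.
Qed.

(** Given windows [[a k, a k + len k)] of lengths [len k > k] and an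
    ultrafilter, the ultrafilter limit of the visit frequencies is an
    invariant content: finite additivity is inherited from the counts, and
    invariance holds because shifting a window of length [len k] changes
    the frequency by at most [1/len k]. *)
Variable Uf : (nat -> Prop) -> Prop.
Hypothesis HU : is_ultra Uf.
Variables (a len : nat -> nat).
Hypothesis Hlen : forall k, (S k <= len k)%nat.

Definition frequency (A : X -> Prop) (k : nat) : R := INR (visits A (a k) (len k)) / INR (len k).

Definition empirical (A : X -> Prop) : R := ulim Uf (frequency A).

Lemma len_pos k : 0 < INR (len k).
Proof. apply lt_0_INR. specialize (Hlen k). lia. Qed.

Lemma frequency01 A k : 0 <= frequency A k <= 1.
Proof.
  unfold frequency. pose proof (len_pos k).
  pose proof (le_INR _ _ (visits_le A (a k) (len k))). pose proof (pos_INR (visits A (a k) (len k))).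
  split; [apply Rmult_le_pos; [lra | left; apply Rinv_0_lt_compat; lra]|].
  apply (Rmult_le_reg_r (INR (len k))); auto. unfold Rdiv. rewrite Rmult_assoc, Rinv_l; lra.
Qed.

Lemma empirical_spec A : is_ulim Uf (frequency A) (empirical A).
Proof. apply ulim_spec01; auto. intros; apply frequency01. Qed.

Lemma empirical_le A c : (forall k, frequency A k <= c) -> empirical A <= c.
Proof.
  intros H. apply (ulim_le Uf HU (frequency A) (fun _ => c)); auto.
  - apply empirical_spec.
  - apply ulim_const; auto.
Qed.

(** Shift invariance: the frequencies of [A ∘ T] and [A] on a window of
    length [len k > k] differ by at most [1/(k+1)]. *)
Lemma empirical_preimage A : empirical (fun x => A (T x)) = empirical A.
Proof.
  apply (ulim_unique Uf HU (frequency (fun x => A (T x)))); [apply empirical_spec|].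
  rewrite <- (Rplus_0_r (empirical A)).
  apply (ulim_ext Uf HU (fun k => frequency A k + (frequency (fun x => A (T x)) k - frequency A k)));
    [intros; ring|].
  apply ulim_plus; auto; [apply empirical_spec|].
  apply ulim_vanish; auto. intros k. unfold frequency. rewrite visits_preimage.
  pose proof (len_pos k).
  replace (INR (visits A (S (a k)) (len k)) / INR (len k) - INR (visits A (a k) (len k)) / INR (len k))
    with ((INR (visits A (S (a k)) (len k)) - INR (visits A (a k) (len k))) * / INR (len k))
    by (field; lra).
  rewrite Rabs_mult, (Rabs_right (/ _)) by (left; apply Rinv_0_lt_compat; auto).
  apply Rle_trans with (1 * / INR (len k)).
  - apply Rmult_le_compat_r; [left; apply Rinv_0_lt_compat; auto | apply visits_shift].
  - rewrite Rmult_1_l. apply Rinv_le_contravar; [pose proof (pos_INR k); lra|].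
    specialize (Hlen k). apply le_INR in Hlen. rewrite S_INR in Hlen. lra.
Qed.

Lemma empirical_content : is_invariant_content T empirical.
Proof.
  split.
  - intros A. apply (ulim_le Uf HU (fun _ => 0) (frequency A)); auto.
    + apply ulim_const; auto.
    + apply empirical_spec.
    + intros; apply frequency01.
  - intros A B H. apply (ulim_unique Uf HU (frequency (fun x => A x \/ B x))); [apply empirical_spec|].
    apply (ulim_ext Uf HU (fun k => frequency A k + frequency B k)).
    + intros k. unfold frequency. rewrite visits_add, plus_INR; auto.
      field. apply Rgt_not_eq, len_pos.
    + apply ulim_plus; auto; apply empirical_spec.
  - intros A B H. apply (ulim_le Uf HU (frequency A) (frequency B)); auto; try apply empirical_spec.
    intros k. apply Rmult_le_compat_r; [left; apply Rinv_0_lt_compat, len_pos|].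
    apply le_INR, visits_mono; auto.
  - apply (ulim_unique Uf HU (frequency (fun _ => True))); [apply empirical_spec|].
    apply (ulim_ext Uf HU (fun _ => 1)); [|apply ulim_const; auto].
    intros k. unfold frequency. rewrite visits_True. field. apply Rgt_not_eq, len_pos.
  - apply empirical_preimage.
Qed.

End Visits.

(** ** The support has the density property *)

Section SupportDensity.
Variable X : Type.
Variable d : X -> X -> R.
Hypothesis Hm : is_metric X d.
Hypothesis Hcpt : is_compact X d.
Variable T : X -> X.
Hypothesis Hcont : is_continuous X d T.

Definition full_closed (C : X -> Prop) : Prop :=
  is_closed X d C /\ forall mu, is_T_invariant X d T mu -> mu C = 1.

Lemma supp_closed : is_closed X d (supp X d T).
Proof.
  apply (closed_ext _ _ (fun y => forall C, full_closed C -> C y)).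
  - apply closed_inter_all. intros C [H _]; auto.
  - intros y; unfold supp, full_closed; split.
    + intros H C HC Hf; apply H; split; auto.
    + intros H C [HC Hf]; apply H; auto.
Qed.

Lemma full_closed_ext C D : full_closed C -> (forall x, C x <-> D x) -> full_closed D.
Proof.
  intros [HC Hfull] H. split; [apply (closed_ext _ _ _ _ HC H)|].
  intros mu Hmu. rewrite <- (mu_ext _ _ _ (proj1 Hmu) C); auto. apply borel_closed; auto.
Qed.

Lemma full_closed_inter C D : full_closed C -> full_closed D ->
  full_closed (fun x => C x /\ D x).
Proof.
  intros [HC HCf] [HD HDf]. split; [apply closed_inter; auto|].
  intros mu Hmu. apply (mu_inter_full _ _ _ (proj1 Hmu)); auto; apply borel_closed; auto.
Qed.

Lemma full_closed_list (l : list (option {C | full_closed C})) :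
  full_closed (fun y => forall c, In (Some c) l -> proj1_sig c y).
Proof.
  induction l as [|[c|] l IH].
  - split; [apply (closed_ext _ _ _ _ (closed_True _ _)); intros y; split; auto; intros _ c []|].
    intros mu Hmu. rewrite (mu_ext _ _ _ (proj1 Hmu) _ (fun _ => True)), (mu_True _ _ _ (proj1 Hmu)); auto.
    + apply (borel_ext _ _ _ _ (borel_True _ _)). intros y; split; auto. intros _ c [].
    + intros y; split; auto. intros _ c [].
  - apply (full_closed_ext _ _ (full_closed_inter _ _ (proj2_sig c) IH)).
    intros y; split.
    + intros [H1 H2] c' [H|H]; [inversion H; subst | ]; auto.
    + intros H. split; [apply H; left | intros c' Hc'; apply H; right]; auto.
  - apply (full_closed_ext _ _ IH). intros y; split.
    + intros H c' [H'|H']; [discriminate | auto].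
    + intros H c' Hc'; apply H; right; auto.
Qed.

Lemma supp_nbhd_contains_full U : is_open X d U -> (forall y, supp X d T y -> U y) ->
  exists C, full_closed C /\ (forall y, C y -> U y).
Proof.
  intros HU HsU.
  set (G := fun i : option {C | full_closed C} => match i with
    | None => U
    | Some c => fun y => ~ proj1_sig c y end).
  destruct (Hcpt _ G) as [l Hl].
  { intros [c|]; simpl; auto. exact (proj1 (proj2_sig c)). }
  { intros y. destruct (classic (U y)) as [Uy|nUy]; [exists None; auto|].
    assert (Hns : ~ supp X d T y) by auto.
    apply not_all_ex_not in Hns as [C HC]. apply imply_to_and in HC as [HCc HC].
    apply imply_to_and in HC as [HCf nCy].
    exists (Some (exist _ C (conj HCc HCf))). simpl. auto. }
  exists (fun y => forall c, In (Some c) l -> proj1_sig c y). split; [apply full_closed_list|].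
  intros y Hy. destruct (Hl y) as [[c|] [Hin Hc]]; simpl in Hc; auto.
  exfalso; apply Hc, Hy; auto.
Qed.

Lemma sparse_windows x U : ~ banach_density_one (fun n => U (iter n T x)) ->
  exists lam, lam < 1 /\ exists a len : nat -> nat, (forall k, (S k <= len k)%nat) /\
    forall k, INR (visits X T x U (a k) (len k)) < lam * INR (len k).
Proof.
  intros Hnd. apply not_all_ex_not in Hnd as [lam Hl]. apply imply_to_and in Hl as [Hlam Hl].
  exists lam. split; auto.
  assert (Hk : forall k : nat, exists p : nat * nat, (S k <= snd p)%nat /\
            INR (visits X T x U (fst p) (snd p)) < lam * INR (snd p)).
  { intros k. apply NNPP; intro H. apply Hl. exists (S k). split; [lia|]. intros a len Hlen.
    exists (filter (fun n => dec (U (iter n T x))) (seq a len)).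
    split; [apply NoDup_filter, seq_NoDup | split].
    - intros n Hn. apply filter_In in Hn as [Hn1 Hn2]. apply in_seq in Hn1.
      split; [exact Hn1 | apply dec_true; auto].
    - apply Rnot_lt_le. intro Hlt. apply H. exists (a, len). auto. }
  destruct (choice _ Hk) as [p Hp].
  exists (fun k => fst (p k)), (fun k => snd (p k)). split; intros k; apply Hp.
Qed.

(** Density of the support: otherwise the empirical content [ν] of some
    sparse windows yields an invariant measure [mu] with
    [1 = mu C <= ν U <= λ < 1] for a closed [C ⊆ U] of full measure. *)
Theorem supp_density : has_density_property d T (supp X d T).
Proof.
  intros x U HU HsU.
  destruct (supp_nbhd_contains_full U HU HsU) as [C [[HCc HCfull] HCU]].
  apply NNPP. intros Hnd.
  destruct (sparse_windows x U Hnd) as [lam [Hlam [a [len [Hlen Hsparse]]]]].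
  destruct nat_ultra as [Uf HUf].
  set (nu := empirical X T x Uf a len).
  pose proof (empirical_content X T x Uf HUf a len Hlen) as Hnu.
  pose proof (HCfull _ (outer_invariant X d Hm Hcpt T Hcont nu Hnu)) as HC1.
  pose proof (outer_le_content X d T nu Hnu U C HU HCU) as HCle.
  assert (HnuU : nu U <= lam).
  { apply (empirical_le X T x Uf HUf a len Hlen). intros k. unfold frequency.
    pose proof (len_pos len Hlen k). specialize (Hsparse k).
    apply (Rmult_le_reg_r (INR (len k))); auto. unfold Rdiv. rewrite Rmult_assoc, Rinv_l; lra. }
  lra.
Qed.

End SupportDensity.

Theorem mainTheorem15 (X : Type) (d : X -> X -> R) (T : X -> X)
  (Hmetric : is_metric X d) (Hne : inhabited X) (Hcpt : is_compact X d)
  (Hcont : is_continuous X d T) :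
  is_closed X d (supp X d T) /\
  has_density_property d T (supp X d T) /\
  (forall K : X -> Prop, is_closed X d K -> has_density_property d T K ->
     forall x, supp X d T x -> K x).
Proof.
  split; [|split].
  - apply supp_closed.
  - apply supp_density; auto.
  - intros K HK Hdens y Hy. apply Hy; auto.
    intros mu Hmu. exact (density_full_measure X d Hmetric T Hcont mu Hmu K HK Hdens).
Qed.
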